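(* In the two-bus model of the context, fix a total demand $d>0$ and generation capacities $\overline{\mathbf q}=(\overline q_1,\overline q_2)$ with $\overline q_1\ge d$. Let $\mathcal D$ be the set of demand profiles $\mathbf d=(d_1,d_2)$ with $d_1,d_2\ge 0$, $d_1+d_2=d$, such that $(\overline{\mathbf q},\mathbf d)$ is feasible for both \textsf{ED-2b} and \textsf{SCED-2b}. Let $\mathbf d^*=(d-\min\{d,f^{\mathsf{ed}}\},\ \min\{d,f^{\mathsf{ed}}\})$ and assume $\mathbf d^*\in\mathcal D$. Then for every $\mathbf d\in\mathcal D$, $\mathsf{PoS}(\overline{\mathbf q},\mathbf d)\le\mathsf{PoS}(\overline{\mathbf q},\mathbf d^* )$, and, writing $\mathbf d^*=(d_1^*,d_2^* )$, $$\mathsf{PoS}(\overline{\mathbf q},\mathbf d^* )=\frac{\alpha_1\big(d_1^*+\min\{f^{\mathsf{sc}},d_2^*\}\big)+\alpha_2\,[d_2^*-f^{\mathsf{sc}}]^+}{\alpha_1 d},$$ where $[x]^+=\max\{x,0\}$.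
   Context: Two-bus network: buses $v_1,v_2$ joined by two parallel lines $e_1,e_2$ with susceptances $B_1,B_2>0$ and thermal limits $\overline f_1,\overline f_2>0$. Bus $i\in\{1,2\}$ has a generator with capacity $\overline q_i\ge 0$ and linear cost $\alpha_i q_i$, and a demand $d_i\ge 0$; throughout $0<\alpha_1\le\alpha_2$ (bus 1 is the cheap bus). An instance is $\boldsymbol\omega=(\overline{\mathbf q},\mathbf d)$ with $\overline{\mathbf q}=(\overline q_1,\overline q_2)$, $\mathbf d=(d_1,d_2)$. Define $f^{\mathsf{ed}}:=(B_1+B_2)\min\{\overline f_1/B_1,\overline f_2/B_2\}$ and $f^{\mathsf{sc}}:=\min\{\overline f_1,\overline f_2\}$ (note $f^{\mathsf{sc}}\le f^{\mathsf{ed}}$). The economic dispatch problem \textsf{ED-2b} is: minimize $\alpha_1q_1+\alpha_2q_2$ over $(q_1,q_2)$ subject to $0\le q_1\le\overline q_1$, $0\le q_2\le\overline q_2$, $q_1+q_2=d_1+d_2$, and $-f^{\mathsf{ed}}\le q_1-d_1\le f^{\mathsf{ed}}$. The security-constrained problem \textsf{SCED-2b} is the same problem with the additional constraint $-f^{\mathsf{sc}}\le q_1-d_1\le f^{\mathsf{sc}}$. Let $c^\star_{\mathsf{ed}}(\boldsymbol\omega)$ and $c^\star_{\mathsf{sc}}(\boldsymbol\omega)$ be the optimal values of \textsf{ED-2b} and \textsf{SCED-2b} for an instance $\boldsymbol\omega$ feasible for both. The price of security of $\boldsymbol\omega$ is $\mathsf{PoS}(\boldsymbol\omega):=c^\star_{\mathsf{sc}}(\boldsymbol\omega)/c^\star_{\mathsf{ed}}(\boldsymbol\omega)$.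 *)

From Stdlib Require Import Reals Lra.
Open Scope R_scope.

(* Network parameters: susceptances B1 B2 and thermal limits fb1 fb2. *)
Definition f_ed (B1 B2 fb1 fb2 : R) : R := (B1 + B2) * Rmin (fb1 / B1) (fb2 / B2).
Definition f_sc (fb1 fb2 : R) : R := Rmin fb1 fb2.

Definition ed_feas (fed qb1 qb2 d1 d2 q1 q2 : R) : Prop :=
  0 <= q1 <= qb1 /\ 0 <= q2 <= qb2 /\ q1 + q2 = d1 + d2 /\
  - fed <= q1 - d1 <= fed.

Definition sced_feas (fed fsc qb1 qb2 d1 d2 q1 q2 : R) : Prop :=
  ed_feas fed qb1 qb2 d1 d2 q1 q2 /\ - fsc <= q1 - d1 <= fsc.

Definition is_opt_value (F : R -> R -> Prop) (a1 a2 c : R) : Prop :=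
  (exists q1 q2, F q1 q2 /\ a1 * q1 + a2 * q2 = c) /\
  (forall q1 q2, F q1 q2 -> c <= a1 * q1 + a2 * q2).

Definition feasible (F : R -> R -> Prop) : Prop := exists q1 q2, F q1 q2.

Definition pos_part (x : R) : R := Rmax x 0.

Definition PoS (fed fsc a1 a2 qb1 qb2 d1 d2 p : R) : Prop :=
  exists cs ce,
    is_opt_value (sced_feas fed fsc qb1 qb2 d1 d2) a1 a2 cs /\
    is_opt_value (ed_feas fed qb1 qb2 d1 d2) a1 a2 ce /\
    p = cs / ce.

Definition in_D (fed fsc qb1 qb2 d d1 d2 : R) : Prop :=
  0 <= d1 /\ 0 <= d2 /\ d1 + d2 = d /\
  feasible (ed_feas fed qb1 qb2 d1 d2) /\
  feasible (sced_feas fed fsc qb1 qb2 d1 d2).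

(** With the cheap generator able to cover all demand, an optimal dispatch
    pushes [q1] as high as the line limit [f] allows, i.e. up to
    [min (d1 + d2) (d1 + f)]; the security constraint merely replaces [f_ed]
    by the smaller [f_sc].  Both optimal costs are therefore explicit, the ED
    cost is never below [a1 d], and it equals [a1 d] exactly when the demand at
    the expensive bus does not exceed [f_ed].  On the uncongested side of [d*]
    the ED cost is minimal while the SCED cost grows as demand moves to bus 2;
    on the congested side the two costs differ by the constant
    [(a2 - a1) (f_ed - f_sc)] while the ED cost decreases towards [a1 d].  In
    both cases the ratio is largest at [d*]. *)

From Stdlib Require Import Reals Lra.
Open Scope R_scope.

Lemma Rdiv_le_compat n n' e e' :
  0 <= n -> n <= n' -> 0 < e' -> e' <= e -> n / e <= n' / e'.
Proof.
  intros Hn Hnn' He' Hee'.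
  unfold Rdiv; apply Rmult_le_compat; try lra.
  - apply Rlt_le, Rinv_0_lt_compat; lra.
  - apply Rinv_le_contravar; lra.
Qed.

Lemma Rdiv_add_le_compat s e e' :
  0 <= s -> 0 < e' -> e' <= e -> (e + s) / e <= (e' + s) / e'.
Proof.
  intros Hs He' Hee'.
  replace ((e + s) / e) with (1 + s / e) by (field; lra).
  replace ((e' + s) / e') with (1 + s / e') by (field; lra).
  apply Rplus_le_compat_l, Rdiv_le_compat; lra.
Qed.

Lemma f_sc_le_f_ed B1 B2 fb1 fb2 :
  0 < B1 -> 0 < B2 -> 0 <= fb1 -> 0 <= fb2 ->
  f_sc fb1 fb2 <= f_ed B1 B2 fb1 fb2.
Proof.
  intros HB1 HB2 Hf1 Hf2; unfold f_sc, f_ed.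
  assert (Hr1 : B1 * (fb1 / B1) = fb1) by (field; lra).
  assert (Hr2 : B2 * (fb2 / B2) = fb2) by (field; lra).
  assert (0 <= fb1 / B1) by nra; assert (0 <= fb2 / B2) by nra.
  pose proof (Rmin_l fb1 fb2); pose proof (Rmin_r fb1 fb2).
  destruct (Rle_dec (fb1 / B1) (fb2 / B2)).
  - rewrite (Rmin_left (fb1 / B1)) by lra; nra.
  - rewrite (Rmin_right (fb1 / B1)) by lra; nra.
Qed.

Lemma is_opt_value_unique F a1 a2 c c' :
  is_opt_value F a1 a2 c -> is_opt_value F a1 a2 c' -> c = c'.
Proof.
  intros [[q1 [q2 [Hq Hc]]] Hmin] [[q1' [q2' [Hq' Hc']]] Hmin'].
  specialize (Hmin _ _ Hq'); specialize (Hmin' _ _ Hq); lra.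
Qed.

Lemma is_opt_value_ext (F G : R -> R -> Prop) a1 a2 c :
  (forall q1 q2, F q1 q2 <-> G q1 q2) ->
  is_opt_value F a1 a2 c -> is_opt_value G a1 a2 c.
Proof.
  intros HFG [[q1 [q2 [Hq Hc]]] Hmin]; split.
  - exists q1, q2; split; [apply HFG |]; assumption.
  - intros p1 p2 Hp; apply Hmin, HFG, Hp.
Qed.

Lemma sced_feas_iff fed fsc qb1 qb2 d1 d2 q1 q2 :
  fsc <= fed ->
  sced_feas fed fsc qb1 qb2 d1 d2 q1 q2 <-> ed_feas fsc qb1 qb2 d1 d2 q1 q2.
Proof. unfold sced_feas, ed_feas; intros; split; intros; lra. Qed.

(** The largest output of the cheap generator compatible with total demand [D]
    and line limit [f]. *)
Definition cheap_output (f D d1 : R) : R := Rmin D (d1 + f).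

Definition dispatch_cost (a1 a2 f D d1 : R) : R :=
  a1 * cheap_output f D d1 + a2 * (D - cheap_output f D d1).

Lemma dispatch_costE a1 a2 f D d1 :
  dispatch_cost a1 a2 f D d1 = a2 * D - (a2 - a1) * cheap_output f D d1.
Proof. unfold dispatch_cost; ring. Qed.

Lemma dispatch_cost_ge a1 a2 f D d1 :
  a1 <= a2 -> a1 * D <= dispatch_cost a1 a2 f D d1.
Proof.
  intros H12; rewrite dispatch_costE.
  assert (cheap_output f D d1 <= D) by apply Rmin_l.
  nra.
Qed.

Lemma dispatch_cost_antitone_limit a1 a2 f f' D d1 :
  a1 <= a2 -> f <= f' -> dispatch_cost a1 a2 f' D d1 <= dispatch_cost a1 a2 f D d1.
Proof.
  intros H12 Hf; rewrite !dispatch_costE.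
  assert (cheap_output f D d1 <= cheap_output f' D d1)
    by (apply Rle_min_compat_l; lra).
  nra.
Qed.

Lemma dispatch_cost_antitone_d1 a1 a2 f D d1 d1' :
  a1 <= a2 -> d1 <= d1' -> dispatch_cost a1 a2 f D d1' <= dispatch_cost a1 a2 f D d1.
Proof.
  intros H12 Hd; rewrite !dispatch_costE.
  assert (cheap_output f D d1 <= cheap_output f D d1')
    by (apply Rle_min_compat_l; lra).
  nra.
Qed.

Lemma dispatch_cost_uncongested a1 a2 f D d1 :
  D <= d1 + f -> dispatch_cost a1 a2 f D d1 = a1 * D.
Proof. intros; unfold dispatch_cost, cheap_output; rewrite Rmin_left by lra; ring. Qed.

Lemma dispatch_cost_congested a1 a2 f D d1 :
  d1 + f <= D -> dispatch_cost a1 a2 f D d1 = a2 * D - (a2 - a1) * (d1 + f).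
Proof. intros; rewrite dispatch_costE; unfold cheap_output; rewrite Rmin_right by lra; ring. Qed.

Lemma dispatch_cost_pos_part a1 a2 f d1 d2 :
  dispatch_cost a1 a2 f (d1 + d2) d1 = a1 * (d1 + Rmin f d2) + a2 * pos_part (d2 - f).
Proof.
  assert (Hm : cheap_output f (d1 + d2) d1 = d1 + Rmin f d2)
    by (unfold cheap_output, Rmin; repeat destruct Rle_dec; lra).
  assert (Hrest : d1 + d2 - (d1 + Rmin f d2) = pos_part (d2 - f))
    by (unfold pos_part, Rmin, Rmax; repeat destruct Rle_dec; lra).
  unfold dispatch_cost; rewrite Hm, Hrest; reflexivity.
Qed.

Lemma ed_feas_le_cheap_output f qb1 qb2 d1 d2 q1 q2 :
  ed_feas f qb1 qb2 d1 d2 q1 q2 -> q1 <= cheap_output f (d1 + d2) d1.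
Proof. unfold ed_feas, cheap_output; intros; apply Rmin_glb; lra. Qed.

(** Any feasible point witnesses that [cheap_output] satisfies the remaining
    constraints, since raising [q1] to it only lowers [q2]. *)
Lemma ed_opt_value f a1 a2 qb1 qb2 d1 d2 :
  a1 <= a2 -> d1 + d2 <= qb1 ->
  feasible (ed_feas f qb1 qb2 d1 d2) ->
  is_opt_value (ed_feas f qb1 qb2 d1 d2) a1 a2 (dispatch_cost a1 a2 f (d1 + d2) d1).
Proof.
  intros H12 Hqb [q1 [q2 Hq]].
  pose proof (ed_feas_le_cheap_output _ _ _ _ _ _ _ Hq) as Hq1.
  split.
  - exists (cheap_output f (d1 + d2) d1), (d1 + d2 - cheap_output f (d1 + d2) d1).
    split; [| reflexivity].
    assert (cheap_output f (d1 + d2) d1 <= d1 + d2) by apply Rmin_l.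
    assert (cheap_output f (d1 + d2) d1 <= d1 + f) by apply Rmin_r.
    unfold ed_feas in *; lra.
  - intros p1 p2 Hp; rewrite dispatch_costE.
    pose proof (ed_feas_le_cheap_output _ _ _ _ _ _ _ Hp).
    unfold ed_feas in Hp; nra.
Qed.

Lemma PoS_iff fed fsc a1 a2 qb1 qb2 d1 d2 p :
  a1 <= a2 -> fsc <= fed -> d1 + d2 <= qb1 ->
  feasible (sced_feas fed fsc qb1 qb2 d1 d2) ->
  PoS fed fsc a1 a2 qb1 qb2 d1 d2 p <->
  p = dispatch_cost a1 a2 fsc (d1 + d2) d1 / dispatch_cost a1 a2 fed (d1 + d2) d1.
Proof.
  intros H12 Hf Hqb [q1 [q2 Hq]].
  pose proof (sced_feas_iff fed fsc qb1 qb2 d1 d2) as Hiff.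
  assert (Os : is_opt_value (sced_feas fed fsc qb1 qb2 d1 d2) a1 a2
                 (dispatch_cost a1 a2 fsc (d1 + d2) d1)).
  { apply is_opt_value_ext with (ed_feas fsc qb1 qb2 d1 d2).
    - intros; symmetry; apply Hiff, Hf.
    - apply ed_opt_value; try assumption.
      exists q1, q2; apply Hiff; assumption. }
  assert (Oe : is_opt_value (ed_feas fed qb1 qb2 d1 d2) a1 a2
                 (dispatch_cost a1 a2 fed (d1 + d2) d1)).
  { apply ed_opt_value; try assumption.
    exists q1, q2; apply Hq. }
  split.
  - intros [cs [ce [Os' [Oe' Hp]]]].
    rewrite (is_opt_value_unique _ _ _ _ _ Os' Os),
            (is_opt_value_unique _ _ _ _ _ Oe' Oe) in Hp.
    exact Hp.
  - intros Hp; exists (dispatch_cost a1 a2 fsc (d1 + d2) d1),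
                      (dispatch_cost a1 a2 fed (d1 + d2) d1).
    split; [exact Os | split; [exact Oe | exact Hp]].
Qed.

Lemma dispatch_cost_ratio_le a1 a2 fsc fed d x :
  0 < a1 -> a1 <= a2 -> 0 < d -> fsc <= fed -> 0 <= x ->
  let xs := d - Rmin d fed in
  dispatch_cost a1 a2 fsc d x / dispatch_cost a1 a2 fed d x <=
  dispatch_cost a1 a2 fsc d xs / dispatch_cost a1 a2 fed d xs.
Proof.
  intros Ha1 H12 Hd Hf Hx xs.
  assert (Exs : dispatch_cost a1 a2 fed d xs = a1 * d).
  { apply dispatch_cost_uncongested; pose proof (Rmin_r d fed); unfold xs; lra. }
  pose proof (dispatch_cost_ge a1 a2 fed d x H12) as Hge.
  pose proof (dispatch_cost_antitone_limit a1 a2 fsc fed d x H12 Hf).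
  rewrite Exs.
  destruct (Rle_lt_dec xs x) as [Hup | Hdown].
  - apply Rdiv_le_compat; try nra.
    apply dispatch_cost_antitone_d1; assumption.
  - (* the line is congested at [x] and at [xs], so the SCED cost exceeds
       the ED cost by the constant [(a2 - a1) (fed - fsc)] *)
    assert (Hxs : xs = d - fed).
    { unfold xs in *; destruct (Rle_dec d fed);
        [rewrite Rmin_left in * by lra | rewrite Rmin_right in * by lra]; lra. }
    rewrite !(dispatch_cost_congested a1 a2 fsc) by lra.
    rewrite (dispatch_cost_congested a1 a2 fed) in * by lra.
    replace (a2 * d - (a2 - a1) * (xs + fsc)) with (a1 * d + (a2 - a1) * (fed - fsc))
      by (rewrite Hxs; ring).
    replace (a2 * d - (a2 - a1) * (x + fsc))
      with (a2 * d - (a2 - a1) * (x + fed) + (a2 - a1) * (fed - fsc)) by ring.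
    apply Rdiv_add_le_compat; nra.
Qed.

Theorem lemma3 (B1 B2 fb1 fb2 a1 a2 qb1 qb2 d : R)
  (hB1 : 0 < B1) (hB2 : 0 < B2) (hf1 : 0 < fb1) (hf2 : 0 < fb2)
  (ha1 : 0 < a1) (ha12 : a1 <= a2)
  (hq1 : 0 <= qb1) (hq2 : 0 <= qb2)
  (hd : 0 < d) (hqd : d <= qb1) :
  let fed := f_ed B1 B2 fb1 fb2 in
  let fsc := f_sc fb1 fb2 in
  let d2s := Rmin d fed in
  let d1s := d - d2s in
  in_D fed fsc qb1 qb2 d d1s d2s ->
  (forall d1 d2 p ps,
      in_D fed fsc qb1 qb2 d d1 d2 ->
      PoS fed fsc a1 a2 qb1 qb2 d1 d2 p ->
      PoS fed fsc a1 a2 qb1 qb2 d1s d2s ps ->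
      p <= ps) /\
  PoS fed fsc a1 a2 qb1 qb2 d1s d2s
    ((a1 * (d1s + Rmin fsc d2s) + a2 * pos_part (d2s - fsc)) / (a1 * d)).
Proof.
  intros fed fsc d2s d1s [_ [_ [Hs [_ Fs]]]].
  assert (Hf : fsc <= fed) by (apply f_sc_le_f_ed; lra).
  split.
  - intros d1 d2 p ps [Hd1 [_ [Hsum [_ Fs']]]] Hp Hps.
    apply PoS_iff in Hp, Hps; try assumption; try lra.
    rewrite Hp, Hps, Hsum, Hs.
    apply dispatch_cost_ratio_le; assumption.
  - apply PoS_iff; try assumption; try lra.
    rewrite dispatch_cost_pos_part, Hs, dispatch_cost_uncongested; [reflexivity |].
    pose proof (Rmin_r d fed); unfold d1s, d2s in *; lra.
Qed.
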